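(* Let $\mathfrak{B}$ be a finite subgroup of $\mathrm{SL}(2,\mathbb{C})$ closed under $B\mapsto -B$ and under transposition, and let $\mathcal{G}=\{[B]:B\in\mathfrak{B}\}$. Suppose $g=[A]\in\mathcal{G}$ has order $2$ and satisfies $[A^T]=[A]$. Then either there exists a complex matrix $M\in\mathbb{C}^{2\times 2}$ with $MM^T=I$ such that $M^TAM\in\left\{\begin{pmatrix} i&0\\0&-i\end{pmatrix},\ -\begin{pmatrix} i&0\\0&-i\end{pmatrix}\right\}$, or $g=\left[\begin{pmatrix}0&1\\-1&0\end{pmatrix}\right]$.
   Context: $[B]$ denotes the set $\{B,-B\}$; $\mathcal{G}$ is a group under $[B_1][B_2]=[B_1B_2]$ with identity $[I]$. An element $g$ has order $2$ if $g\neq[I]$ and $g^2=[I]$. A complex matrix $M$ with $MM^T=I$ is called (complex) orthogonal (this is not the unitary condition). *)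

From HB Require Import structures.
From mathcomp Require Import all_boot all_order all_algebra.
From mathcomp Require Import complex.
From mathcomp Require Import reals.
Set Implicit Arguments. Unset Strict Implicit. Unset Printing Implicit Defensive.
Import Order.TTheory GRing.Theory Num.Theory.
Local Open Scope ring_scope.
Local Open Scope complex_scope.

(* [A] = [B] in G, where [B] = {B, -B} *)
Definition pm_eq (F : nzRingType) (A B : 'M[F]_2) : Prop := A = B \/ A = - B.

Definition finite_SL2_subgroup (F : fieldType) (S : seq 'M[F]_2) : Prop :=
  [/\ (1%:M : 'M[F]_2) \in S,
      (forall A B, A \in S -> B \in S -> A *m B \in S),
      (forall A, A \in S -> invmx A \in S) &
      (forall A, A \in S -> \det A = 1)].

Definition diag_i_mi (R : rcfType) : 'M[R[i]]_2 :=
  \matrix_(k < 2, l < 2)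
    (if k == l then (if k == 0 :> nat then 'i else - 'i) else 0).

Definition Jmx (F : nzRingType) : 'M[F]_2 :=
  \matrix_(k < 2, l < 2)
    (if (k == 0 :> nat) && (l == 1 :> nat) then 1
     else if (k == 1 :> nat) && (l == 0 :> nat) then -1 else 0).

From mathcomp Require Import all_boot all_order all_algebra.
From mathcomp Require Import complex reals.
From mathcomp Require Import ring.
Set Implicit Arguments. Unset Strict Implicit. Unset Printing Implicit Defensive.
Import GRing.Theory Num.Theory.
Local Open Scope ring_scope.

(* By Cayley-Hamilton, A in SL(2) satisfies A^2 = (tr A) A - 1. If A^2 = 1
   this forces (tr A) A = 2, hence A = 1 or -1, which is excluded; so A^2 = -1
   and tr A = 0. An antisymmetric such A is a multiple of J of determinant 1,
   i.e. J or -J. A symmetric one is [[a, b], [b, -a]] with a^2 + b^2 = -1 = i^2,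
   and the complex rotation [[c, -s], [s, c]] by the "half angle" of (a, b)/i,
   i.e. c^2 - s^2 = -i a and 2cs = -i b, conjugates it to diag(i, -i). *)

Section Matrix2.

Variable R : comNzRingType.
Implicit Types A B : 'M[R]_2.

Lemma ord2P (i : 'I_2) : i = 0 \/ i = 1.
Proof. by case: i => [[|[|k]] lt_i2] //; [left | right]; apply: val_inj. Qed.

Lemma lift0_ord2 : lift ord0 ord0 = 1 :> 'I_2.
Proof. exact: val_inj. Qed.

Lemma eq_mx2 A B :
  A 0 0 = B 0 0 -> A 0 1 = B 0 1 -> A 1 0 = B 1 0 -> A 1 1 = B 1 1 -> A = B.
Proof.
move=> e00 e01 e10 e11; apply/matrixP => i j.
by case: (ord2P i) => ->; case: (ord2P j) => ->.
Qed.

Lemma mulmx2E A B i j : (A *m B) i j = A i 0 * B 0 j + A i 1 * B 1 j.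
Proof.
by rewrite !mxE !big_ord_recl big_ord0 addr0 lift0_ord2.
Qed.

Lemma mxtrace2 A : \tr A = A 0 0 + A 1 1.
Proof.
by rewrite /mxtrace !big_ord_recl big_ord0 addr0 lift0_ord2.
Qed.

Lemma det_mx2 A : \det A = A 0 0 * A 1 1 - A 0 1 * A 1 0.
Proof.
rewrite (expand_det_row _ 0) !big_ord_recl big_ord0 addr0 /cofactor !det_mx11.
rewrite !mxE /= expr0 expr1 mul1r mulN1r mulrN.
by congr (A _ _ * A _ _ - A _ _ * A _ _); apply: val_inj.
Qed.

Lemma cayley_hamilton2 A : A *m A = \tr A *: A - (\det A)%:M.
Proof.
by apply: eq_mx2; rewrite mulmx2E mxtrace2 det_mx2 !mxE /= ?mulr1n ?mulr0n; ring.
Qed.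

Definition rot_mx (c s : R) : 'M[R]_2 :=
  \matrix_(k < 2, l < 2) (if k == l then c else if k == 0 :> nat then - s else s).

Definition diag_pm (lam : R) : 'M[R]_2 :=
  \matrix_(k < 2, l < 2) (if k == l then (if k == 0 :> nat then lam else - lam) else 0).

Lemma rot_mx_orthogonal (c s : R) :
  c ^+ 2 + s ^+ 2 = 1 -> rot_mx c s *m (rot_mx c s)^T = 1%:M.
Proof.
by move=> cs1; apply: eq_mx2; rewrite !mulmx2E !mxE /= -?cs1; ring.
Qed.

End Matrix2.

Section SL2.

Variable F : fieldType.
Implicit Types A : 'M[F]_2.

Lemma sl2_sqrN1_trace A : \det A = 1 -> A *m A = - 1%:M -> \tr A = 0.
Proof.
move=> detA /eqP; rewrite cayley_hamilton2 detA subr_eq addNr scaler_eq0.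
case/orP=> /eqP // A0.
by move: detA; rewrite A0 det0 => /eqP; rewrite eq_sym oner_eq0.
Qed.

Lemma det_Jmx : \det (Jmx F) = 1.
Proof. by rewrite det_mx2 !mxE /= mul0r mul1r sub0r opprK. Qed.

Hypothesis two_neq0 : 2%:R != 0 :> F.

Lemma oppr_fixed_eq0 (x : F) : x = - x -> x = 0.
Proof.
move=> /eqP; rewrite -subr_eq0 opprK -mulr2n -mulr_natr mulf_eq0.
by rewrite (negbTE two_neq0) orbF => /eqP.
Qed.

Lemma sl2_sqr1 A : \det A = 1 -> A *m A = 1%:M -> A = 1%:M \/ A = - 1%:M.
Proof.
move=> detA /eqP; rewrite cayley_hamilton2 detA subr_eq => /eqP trA.
have {}trA : \tr A *: A = 2%:R *: 1%:M by rewrite trA scaler_nat mulr2n.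
have tr2 : (\tr A / 2%:R) ^+ 2 = 1.
  have := congr1 mxtrace trA; rewrite !mxtraceZ mxtrace1 => sqr_tr.
  by rewrite expr_div_n !expr2 sqr_tr divff // mulf_neq0.
have {}trA e : \tr A = e * 2%:R -> e *: A = 1%:M.
  by move=> tre; apply: (scalerI two_neq0); rewrite scalerA mulrC -tre.
move/eqP: tr2; rewrite sqrf_eq1 => /orP[] /eqP/(canRL (divfK two_neq0))/trA.
  by rewrite scale1r; left.
by rewrite scaleN1r => <-; right; rewrite opprK.
Qed.

Lemma skew_mx2 A : A^T = - A -> A = A 0 1 *: Jmx F.
Proof.
move=> skewA; have skew i j : A j i = - A i j.
  by have := congr1 (fun M : 'M_2 => M i j) skewA; rewrite !mxE.
apply: eq_mx2; rewrite !mxE /= ?mulr0 ?mulr1 ?mulrN1 -?skew //;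
  exact: oppr_fixed_eq0 (skew _ _).
Qed.

Lemma sl2_skew A : \det A = 1 -> A^T = - A -> A = Jmx F \/ A = - Jmx F.
Proof.
move=> + /skew_mx2 AJ; rewrite AJ detZ det_Jmx mulr1 => /eqP.
by rewrite sqrf_eq1 => /orP[] /eqP ->; [left; rewrite scale1r | right; rewrite scaleN1r].
Qed.

End SL2.

Section OrthogonalDiagonalization.

Variable C : numClosedFieldType.

Lemma exists_half_angle (p q : C) : p ^+ 2 + q ^+ 2 = 1 ->
  exists c s : C, [/\ c ^+ 2 + s ^+ 2 = 1, c ^+ 2 - s ^+ 2 = p & 2 * c * s = q].
Proof.
move=> pq1; have two_neq0 : 2 != 0 :> C by rewrite pnatr_eq0.
have q2 : q ^+ 2 = 1 - p ^+ 2 by rewrite -pq1 addrC addKr.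
have [p_eqN1|p_neqN1] := eqVneq p (-1).
  have /eqP : q ^+ 2 = 0 by rewrite q2 p_eqN1 sqrrN expr1n subrr.
  rewrite expf_eq0 /= => /eqP ->.
  by exists 0, 1; rewrite p_eqN1 expr0n expr1n /= add0r sub0r mulr0 mul0r.
have p1_neq0 : 1 + p != 0 by rewrite addrC addr_eq0.
pose c := sqrtC ((1 + p) / 2); have c2 : c ^+ 2 = (1 + p) / 2 := sqrtCK _.
have c_neq0 : c != 0.
  by rewrite -sqrf_eq0 c2 mulf_eq0 invr_eq0 negb_or p1_neq0.
pose s := q / (2 * c); have s2 : s ^+ 2 = (1 - p) / 2.
  by rewrite expr_div_n exprMn c2 q2; field; exact: p1_neq0.
exists c, s; rewrite c2 s2; split; [by field | by field |].
by rewrite /s mulrC divfK // mulf_neq0.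
Qed.

Lemma sym_traceless_orthogonal_diag (A : 'M[C]_2) (lam : C) :
  A^T = A -> \tr A = 0 -> lam != 0 -> lam ^+ 2 = - \det A ->
  exists M : 'M[C]_2, M *m M^T = 1%:M /\ M^T *m A *m M = diag_pm lam.
Proof.
move=> symA trA lam_neq0 detA.
have A10 : A 1 0 = A 0 1 by rewrite -[in LHS]symA mxE.
have A11 : A 1 1 = - A 0 0 by apply/eqP; rewrite -addr_eq0 addrC -mxtrace2 trA.
have sumsq : A 0 0 ^+ 2 + A 0 1 ^+ 2 = lam ^+ 2.
  by rewrite detA det_mx2 A10 A11; ring.
have pq1 : (A 0 0 / lam) ^+ 2 + (A 0 1 / lam) ^+ 2 = 1.
  by rewrite !expr_div_n -mulrDl sumsq divff // sqrf_eq0.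
have [c [s [cs1 cs_p cs_q]]] := exists_half_angle pq1.
pose M := rot_mx c s; have MMT : M *m M^T = 1%:M := rot_mx_orthogonal cs1.
have AE : A = M *m diag_pm lam *m M^T.
  have a_eq : A 0 0 = lam * (c ^+ 2 - s ^+ 2) by rewrite cs_p mulrC divfK.
  have b_eq : A 0 1 = lam * (2 * c * s) by rewrite cs_q mulrC divfK.
  by apply: eq_mx2; rewrite !mulmx2E !mxE /= ?A10 ?A11 ?a_eq ?b_eq; ring.
exists M; split => //.
by rewrite AE !mulmxA (mulmx1C MMT) mul1mx -mulmxA (mulmx1C MMT) mulmx1.
Qed.

End OrthogonalDiagonalization.

Theorem mainTheorem7 (R : realType) (S : seq 'M[R[i]]_2) (A : 'M[R[i]]_2) :
  finite_SL2_subgroup S ->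
  (forall B, B \in S -> - B \in S) ->
  (forall B, B \in S -> B^T \in S) ->
  A \in S ->
  ~ pm_eq A 1%:M ->
  pm_eq (A *m A) 1%:M ->
  pm_eq A^T A ->
  (exists M : 'M[R[i]]_2, M *m M^T = 1%:M /\
      (M^T *m A *m M = diag_i_mi R \/ M^T *m A *m M = - diag_i_mi R))
  \/ pm_eq A (Jmx R[i]).
Proof.
move=> [_ _ _ detS] _ _ SA notpmI AA AT; have detA := detS A SA.
have two_neq0 : 2%:R != 0 :> R[i] by rewrite pnatr_eq0.
case: AA => [AA1 | AAN1]; first by case: notpmI; exact (sl2_sqr1 two_neq0 detA AA1).
have trA := sl2_sqrN1_trace detA AAN1.
case: AT => [symA | skewA]; last by right; exact (sl2_skew two_neq0 detA skewA).
have i_neq0 : 'i%C != 0 :> R[i] by rewrite -sqrf_eq0 sqr_i oppr_eq0 oner_eq0.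
have i2 : 'i%C ^+ 2 = - \det A :> R[i] by rewrite sqr_i detA.
have [M [MMT MAM]] := sym_traceless_orthogonal_diag symA trA i_neq0 i2.
by left; exists M; split; [| left].
Qed.
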